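(* Let $k\in\mathbb{N}$ and let $p_1,\dots,p_k$ be squarefree positive integers such that $K=\mathbb{Q}(\sqrt{p_1},\dots,\sqrt{p_k})$ has degree $2^k$ over $\mathbb{Q}$. Suppose that $\alpha=\sum_{I\subset\{1,\dots,k\}}a_I\sqrt{p_I}$ (with $a_I\in\mathbb{Q}$) is a totally positive element of the ring of integers $\mathcal{O}_K$. If $a_I\neq 0$ for some $I$, then $\mathrm{Tr}_{K/\mathbb{Q}}(\alpha)>\sqrt{p_I}$.
   Context: For $I\subset\{1,\dots,k\}$, $p_I$ denotes the squarefree part of $\prod_{i\in I}p_i$, i.e. $p_I=\frac{1}{\ell^2}\prod_{i\in I}p_i$ where $\ell$ is the largest integer for which this is an integer (so $p_\emptyset=1$); the elements $\sqrt{p_I}$ form a $\mathbb{Q}$-basis of $K$. An element of $K$ is totally positive if all its images under the real embeddings of $K$ are positive. *)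

From mathcomp Require Import all_boot all_order all_algebra all_field.
Set Implicit Arguments. Unset Strict Implicit. Unset Printing Implicit Defensive.
Import Order.TTheory GRing.Theory Num.Theory.
Local Open Scope ring_scope.

Definition squarefree (n : nat) : Prop :=
  forall d : nat, (1 < d)%N -> ~~ (d * d %| n)%N.

Definition sq_div (n : nat) : nat := \max_(l < n.+1 | (l * l %| n)%N) l.
Definition sqfree_part (n : nat) : nat := (n %/ (sq_div n * sq_div n))%N.

Definition pI (k : nat) (p : 'I_k -> nat) (I : {set 'I_k}) : nat :=
  sqfree_part (\prod_(i in I) p i)%N.

Definition sqrt_pI (k : nat) (p : 'I_k -> nat) (I : {set 'I_k}) : algC :=
  sqrtC ((pI p I)%:R).

(* K = Q(sqrt p_1, ..., sqrt p_k) is Q-spanned by the 2^k monomials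
   prod_{i in I} sqrt p_i; [K:Q] = 2^k means these are Q-linearly independent. *)
Definition full_degree (k : nat) (p : 'I_k -> nat) : Prop :=
  forall c : {set 'I_k} -> rat,
    \sum_(I : {set 'I_k}) ratr (c I) * \prod_(i in I) sqrtC ((p i)%:R) = 0 :> algC ->
    forall I, c I = 0.

Definition mq_elt (k : nat) (p : 'I_k -> nat) (a : {set 'I_k} -> rat) : algC :=
  \sum_(I : {set 'I_k}) ratr (a I) * sqrt_pI p I.

(* Totally positive: every embedding of K into C (= restriction of a ring
   endomorphism of the algebraic closure algC) sends alpha to a positive real. *)
Definition totally_positive (x : algC) : Prop :=
  forall s : {rmorphism algC -> algC}, 0 < s x.

(* M is the matrix (in the Q-basis (sqrt p_I)_I of K) of multiplication by x:
   x * sqrt p_J = sum_I M I J sqrt p_I.  Tr_{K/Q}(x) is its trace. *)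
Definition mult_matrix (k : nat) (p : 'I_k -> nat) (x : algC)
    (M : {set 'I_k} -> {set 'I_k} -> rat) : Prop :=
  forall J : {set 'I_k},
    x * sqrt_pI p J = \sum_(I : {set 'I_k}) ratr (M I J) * sqrt_pI p I.

Definition trace_of (k : nat) (M : {set 'I_k} -> {set 'I_k} -> rat) : rat :=
  \sum_(J : {set 'I_k}) M J J.

(* For S a set of indices, the automorphism sigma_S of algC flipping the signs
   of the sqrt p_i with i in S exists: by linear independence, sqrt p_i lies
   outside the field spanned by the monomials avoiding i, over which it is
   therefore conjugate to -sqrt p_i.  sigma_S multiplies sqrt p_I by the
   character chi_S(I) = (-1)^|S ∩ I|, and by orthogonality of characters
   sum_S chi_S(J) sigma_S(x) extracts 2^k times the sqrt p_J-coordinate of x.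
   Applied to alpha sqrt p_J this shows Tr(alpha) = sum_S sigma_S(alpha);
   applied to alpha it gives an algebraic integer 2^k a_I sqrt p_I with
   rational square, so c = 2^k a_I is a nonzero integer as p_I is squarefree.
   As every sigma_S(alpha) is positive and chi_S(I) takes both signs when
   I is nonempty, sqrt p_I <= |c| sqrt p_I < Tr(alpha).  For I empty, either
   some a_{j} is nonzero, or Tr(alpha) is twice the positive rational
   algebraic integer sum_{S not containing j} sigma_S(alpha). *)

From mathcomp Require Import all_boot all_order all_algebra all_field.
From mathcomp Require Import zify ring.
Set Implicit Arguments. Unset Strict Implicit. Unset Printing Implicit Defensive.
Import Order.TTheory GRing.Theory Num.Theory.
Local Open Scope ring_scope.

Lemma prod_setM_symdiff (R : comPzSemiRingType) (T : finType) (r : T -> R)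
    (J K : {set T}) :
  (\prod_(j in J) r j) * (\prod_(j in K) r j) =
  (\prod_(j in J :&: K) r j ^+ 2) * \prod_(j in (J :\: K) :|: (K :\: J)) r j.
Proof.
rewrite (big_setID K) (big_setID (A := K) J) /= (setIC K J).
rewrite [X in _ = _ * X](big_setID (J :\: K)) /=.
have -> : (J :\: K :|: K :\: J) :&: (J :\: K) = J :\: K.
  by apply/setP => x; rewrite !inE; case: (x \in J); case: (x \in K).
have -> : (J :\: K :|: K :\: J) :\: (J :\: K) = K :\: J.
  by apply/setP => x; rewrite !inE; case: (x \in J); case: (x \in K).
under [X in _ = X * _]eq_bigr do rewrite expr2.
rewrite big_split /=; set A := \prod_(j in J :&: K) r j.
set B := \prod_(j in J :\: K) r j; set C := \prod_(j in K :\: J) r j.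
by rewrite !mulrA -(mulrA A B A) (mulrC B A) !mulrA.
Qed.

Section Characters.
Variables (R : numDomainType) (T : finType).
Implicit Types S J K : {set T}.

Definition chi S J : R := \prod_(j in J) (-1) ^+ (j \in S).

Lemma chi_sqr S J : chi S J ^+ 2 = 1.
Proof. by rewrite -prodrXl big1 // => j _; rewrite sqrr_sign. Qed.

Lemma chi_set0l J : chi set0 J = 1.
Proof. by rewrite /chi big1 // => j _; rewrite inE. Qed.

Lemma chi_set1r S j : chi S [set j] = (-1) ^+ (j \in S).
Proof. by rewrite /chi big_set1. Qed.

Lemma chi_set1l j J : j \in J -> chi [set j] J = -1.
Proof.
move=> jJ; rewrite /chi (bigD1 j) //= big1 => [|i /andP[_ /negbTE ij]].
  by rewrite inE eqxx mulr1.
by rewrite inE ij.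
Qed.

Lemma chiM S J K : chi S J * chi S K = chi S ((J :\: K) :|: (K :\: J)).
Proof.
by rewrite /chi prod_setM_symdiff big1 ?mul1r // => j _; rewrite sqrr_sign.
Qed.

Definition toggle (j : T) S := if j \in S then S :\ j else j |: S.

Lemma in_toggle j S i : (i \in toggle j S) = (i == j) (+) (i \in S).
Proof.
rewrite /toggle; case: ifP => jS; rewrite !inE; case: eqVneq => [-> | //].
all: by rewrite jS.
Qed.

Lemma toggleK j : involutive (toggle j).
Proof. by move=> S; apply/setP => i; rewrite !in_toggle addbA addbb. Qed.

Lemma chi_toggle j S J : j \in J -> chi (toggle j S) J = - chi S J.
Proof.
move=> jJ; rewrite /chi; under eq_bigr do rewrite in_toggle signr_addb.
rewrite big_split /= (bigD1 j) //= eqxx big1 ?mulr1 ?mulN1r // => i /andP[_].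
by move/negbTE->.
Qed.

Lemma sum_chi J : \sum_S chi S J = (J == set0)%:R * #|{set T}|%:R.
Proof.
have [-> | /set0Pn[j jJ]] := eqVneq J set0.
  by under eq_bigr do rewrite /chi big_set0; rewrite sumr_const mul1r.
set X := \sum_S _; suff : X *+ 2 == 0 by rewrite mulrn_eq0 mul0r => /eqP.
rewrite mulr2n {1}/X (reindex_inj (inv_inj (toggleK j))) /=.
under eq_bigr do rewrite chi_toggle //.
by rewrite sumrN addNr.
Qed.

Lemma sum_chiM J K : \sum_S chi S J * chi S K = (J == K)%:R * #|{set T}|%:R.
Proof.
under eq_bigr do rewrite chiM; rewrite sum_chi; congr (_%:R * _).
by rewrite setU_eq0 !setD_eq0 eqEsubset.
Qed.

Lemma chi_inversion (g : {set T} -> R) J :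
  \sum_S chi S J * \sum_K g K * chi S K = g J * #|{set T}|%:R.
Proof.
under eq_bigr do rewrite mulr_sumr; rewrite exchange_big /=.
under eq_bigr do (under eq_bigr do rewrite mulrCA; rewrite -mulr_sumr sum_chiM).
rewrite (bigD1 J) //= eqxx mul1r big1 ?addr0 // => K /negbTE KJ.
by rewrite eq_sym KJ mul0r mulr0.
Qed.

End Characters.

Arguments chi {R T} S J.

Lemma ltr_sum_sign (R : numDomainType) (T : finType) (e y : T -> R) s1 :
    (forall s, 0 < y s) -> (forall s, e s ^+ 2 = 1) -> e s1 = -1 ->
  \sum_s e s * y s < \sum_s y s.
Proof.
move=> y_gt0 e_sqr e1; rewrite -subr_gt0 -sumrB (bigD1 s1) //= e1 mulN1r opprK.
apply: ltr_wpDr; last by rewrite addr_gt0.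
apply: sumr_ge0 => s _; rewrite -{1}[y s]mul1r -mulrBl.
rewrite mulr_ge0 ?(ltW (y_gt0 s)) // subr_ge0.
have /eqP := e_sqr s; rewrite sqrf_eq1 => /orP[] /eqP-> //.
exact: le_trans (lerN10 _) ler01.
Qed.

Lemma ltr_norm_sum_sign (R : numDomainType) (T : finType) (e y : T -> R) s0 s1 :
    (forall s, 0 < y s) -> (forall s, e s ^+ 2 = 1) -> e s0 = 1 -> e s1 = -1 ->
  `|\sum_s e s * y s| < \sum_s y s.
Proof.
move=> y_gt0 e_sqr e0 e1; apply/real_ltr_normlP; last split.
- apply: rpred_sum => s _; apply: rpredM; last exact: gtr0_real.
  have /eqP := e_sqr s; rewrite sqrf_eq1.
  by case/orP => /eqP->; rewrite ?rpredN rpred1.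
- rewrite -sumrN; under eq_bigr do rewrite -mulNr.
  by apply: (ltr_sum_sign (s1 := s0)) => // [s|]; rewrite ?sqrrN ?e0.
- exact: ltr_sum_sign e1.
Qed.

Section SquarefreePart.
Variable n : nat.
Hypothesis n_gt0 : (0 < n)%N.

Lemma sq_div_max l : (l * l %| n)%N -> (l <= sq_div n)%N.
Proof.
move=> dvd_l; have l_lt : (l < n.+1)%N.
  rewrite ltnS; apply: leq_trans (dvdn_leq n_gt0 dvd_l).
  by case: l {dvd_l} => //= l; nia.
exact: (leq_bigmax_cond (Ordinal l_lt)).
Qed.

Lemma sq_div_gt0 : (0 < sq_div n)%N.
Proof. by apply: sq_div_max; rewrite dvd1n. Qed.

Lemma sq_div_dvd : (sq_div n * sq_div n %| n)%N.
Proof.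
have one_lt : (1 < n.+1)%N by [].
rewrite /sq_div (bigop.bigmax_eq_arg (Ordinal one_lt)) ?dvd1n //.
by case: arg_maxnP.
Qed.

Lemma sqfree_part_gt0 : (0 < sqfree_part n)%N.
Proof. by rewrite divn_gt0 ?muln_gt0 ?sq_div_gt0 // dvdn_leq // sq_div_dvd. Qed.

Lemma sqfree_part_squarefree : squarefree (sqfree_part n).
Proof.
move=> d d_gt1; apply/negP => dvd_d.
have : ((d * sq_div n) * (d * sq_div n) %| n)%N.
  by rewrite -[X in (_ %| X)%N](divnK sq_div_dvd) mulnACA dvdn_mul.
move/sq_div_max; have := sq_div_gt0; nia.
Qed.

Lemma sqrtC_sq_div :
  sqrtC n%:R = (sq_div n)%:R * sqrtC (sqfree_part n)%:R :> algC.
Proof.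
rewrite -{1}(divnK sq_div_dvd) mulnC natrM sqrtCM ?nnegrE ?ler0n //.
by rewrite natrM -expr2 sqrCK ?ler0n.
Qed.

End SquarefreePart.

Lemma sqfree_part1 : sqfree_part 1 = 1%N.
Proof.
by have := sq_div_dvd (isT : (0 < 1)%N); rewrite dvdn1 /sqfree_part => /eqP->.
Qed.

Lemma prod_sqrtC_nat (T : finType) (P : pred T) (n : T -> nat) :
  \prod_(i | P i) sqrtC (n i)%:R = sqrtC (\prod_(i | P i) n i)%:R :> algC.
Proof.
elim/big_rec2: _ => [|i x m _ ->]; first by rewrite sqrtC1.
by rewrite natrM sqrtCM ?nnegrE ?ler0n.
Qed.

Lemma Cint_sqr_squarefree (y : algC) (n : nat) : y \in Crat -> squarefree n ->
  y ^+ 2 * n%:R \in Num.int -> y \in Num.int.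
Proof.
move=> /CratP[q ->] sqf_n /intrP[z Dz].
have den_gt0 := denq_gt0 q.
have num_den : (numq q ^+ 2 * n%:Z = z * denq q ^+ 2)%R.
  apply: (@intr_inj algC); rewrite !rmorphM /= -Dz /ratr pmulrn.
  by field; rewrite intr_eq0 gt_eqF.
have dvd_den : (`|denq q| * `|denq q| %| `|numq q| * `|numq q| * n)%N.
  have := congr1 (fun x : int => `|x|%N) num_den => /=.
  by rewrite !abszM /= => ->; exact: dvdn_mull.
rewrite Gauss_dvdr in dvd_den; last first.
  by rewrite coprimeMl !coprimeMr coprime_sym coprime_num_den.
have den1 : denq q = 1.
  have [|/sqf_n|] := ltngtP `|denq q|%N 1; rewrite ?dvd_den //.
    by rewrite ltnS leqn0 absz_eq0 => /eqP den0; rewrite den0 in den_gt0.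
  by move: den_gt0; case: (denq q) => // m _ /= ->.
by rewrite /ratr den1 divr1 intr_int.
Qed.

Section MonomialSpan.
Variables (F : fieldType) (L : fieldExtType F) (T : finType) (r : T -> L).

Definition monomial (J : {set T}) : L := \prod_(j in J) r j.

Definition monomial_span (A : {set T}) : {vspace L} :=
  (\sum_(J : {set T} | J \subset A) <[monomial J]>)%VS.

Lemma memv_monomial_span (A J : {set T}) :
  J \subset A -> monomial J \in monomial_span A.
Proof. by move=> sJA; rewrite memvE; apply: (sumv_sup J). Qed.

Lemma memv_monomial_span1 (A : {set T}) j : j \in A -> r j \in monomial_span A.
Proof.
by rewrite -sub1set => /memv_monomial_span; rewrite /monomial big_set1.
Qed.

Hypothesis sqr_in_base : forall j, r j ^+ 2 \in 1%VS.

Lemma monomial_span_is_aspace (A : {set T}) : is_aspace (monomial_span A).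
Proof.
rewrite /is_aspace has_algid1 /=; last first.
  by have := memv_monomial_span (sub0set A); rewrite /monomial big_set0.
apply/prodvP => u v /memv_sumP[us us_in ->] /memv_sumP[vs vs_in ->].
rewrite mulr_suml; apply: memv_suml => J sJA; rewrite mulr_sumr.
apply: memv_suml => K sKA.
have [/vlineP[b ->] /vlineP[c ->]] := (us_in J sJA, vs_in K sKA).
rewrite -scalerAl -scalerAr scalerA /monomial prod_setM_symdiff; apply: memvZ.
have /vlineP[d ->] : \prod_(j in J :&: K) r j ^+ 2 \in 1%VS.
  by apply: rpred_prod => j _; apply: sqr_in_base.
rewrite -scalerAl mul1r; apply/memvZ/memv_monomial_span.
by rewrite subUset !subDset !subsetU ?sJA ?sKA ?orbT.
Qed.

End MonomialSpan.

Lemma minPoly_quadratic (F : fieldType) (L : fieldExtType F)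
    (E : {subfield L}) (x : L) :
  x \notin E -> x ^+ 2 \in E -> minPoly E x = 'X^2 - (x ^+ 2)%:P.
Proof.
move=> xNE x2E; set P := 'X^2 - _.
have szP : size P = 3%N by rewrite size_XnsubC.
have dvd_mP : minPoly E x %| P.
  apply: minPoly_dvdp; last by rewrite /root !hornerE subrr.
  by rewrite rpredB ?rpredX ?polyOverX ?polyOverC.
have sz_m : size (minPoly E x) = 3%N.
  have P0 : P != 0 by rewrite -size_poly_gt0 szP.
  have := dvdp_leq P0 dvd_mP; rewrite szP size_minPoly.
  rewrite -adjoin_deg_eq1 /adjoin_degree in xNE *.
  by case: (_.-1) xNE => [|[|n]].
apply/eqP; rewrite -eqp_monic ?monic_minPoly ?monicXnsubC //.
by rewrite -dvdp_size_eqp // sz_m szP.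
Qed.

Lemma quadratic_aut_exists (F : fieldType) (L : fieldExtType F)
    (E : {subfield L}) (x : L) :
  x \notin E -> x ^+ 2 \in E -> <<E; x>>%VS = fullv ->
  {f : 'AEnd(L) | {in E, forall y, f y = y} & f x = - x}.
Proof.
move=> xNE x2E Ex_full.
have root_Nx : root (map_poly \1%VF (minPoly E x)) (- x).
  by rewrite lfun1_poly minPoly_quadratic // /root !hornerE sqrrN subrr.
pose f := kHomExtend E \1%VF x (- x).
have homEf : kHom E fullv f.
  by rewrite -Ex_full; apply: kHomExtendP (subvv E) (kHom1 E E) root_Nx.
have homf : ahom_in fullv f by rewrite -k1HomE (kHomSl (sub1v E) homEf).
exists (AHom homf) => [y Ey|] /=; first by rewrite kHomExtend_id ?id_lfunE.
exact: kHomExtend_val (kHom1 E E) root_Nx.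
Qed.

Section SqrtFlip.
Variables (k : nat) (p : 'I_k -> nat).
Hypothesis hdeg : full_degree p.
Variables (L : fieldExtType rat) (LC : {rmorphism L -> algC}) (r : 'I_k -> L).
Hypotheses (LC_r : forall j, LC (r j) = sqrtC (p j)%:R)
  (r_gen : <<1 & codom r>>%VS = fullv).

Let r_sqr j : r j ^+ 2 = (p j)%:R.
Proof. by apply: (fmorph_inj LC); rewrite rmorphXn rmorph_nat LC_r sqrtCK. Qed.

Let r_sqr_base j : r j ^+ 2 \in 1%VS.
Proof. by rewrite r_sqr rpred_nat. Qed.

Let span_without i : {subfield L} :=
  ASpace (monomial_span_is_aspace r_sqr_base [set~ i]).

Lemma r_notin_span_without i : r i \notin monomial_span r [set~ i].
Proof.
apply/negP => /memv_sumP[vs vs_in ri_sum].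
have /fin_all_exists[c Dvs] : forall J : {set 'I_k}, exists c : rat,
    J \subset [set~ i] -> vs J = c *: monomial r J.
  move=> J; case: (boolP (J \subset [set~ i])) => [/vs_in/vlineP[c ->]|_].
    by exists c.
  by exists 0.
pose c' (J : {set 'I_k}) : rat :=
  (if J \subset [set~ i] then c J else 0) - (J == [set i])%:R.
have : c' [set i] = 0.
  apply: hdeg; under eq_bigr do rewrite rmorphB mulrBl; rewrite sumrB.
  rewrite [X in _ - X](bigD1 [set i]) //= eqxx big_set1.
  rewrite [X in _ * _ + X]big1 => [|J /negbTE->]; last by rewrite rmorph0 mul0r.
  rewrite rmorph1 mul1r addr0 -LC_r ri_sum rmorph_sum.
  apply/eqP; rewrite subr_eq0 [X in _ == X]big_mkcond; apply/eqP/eq_bigr => J _.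
  case: ifP => [/Dvs-> | _]; last by rewrite rmorph0 mul0r.
  rewrite rmorphZ_num rmorph_prod.
  by under [X in _ = _ * X]eq_bigr do rewrite LC_r.
by move/eqP; rewrite /c' sub1set !inE !eqxx /= sub0r oppr_eq0 oner_eq0.
Qed.

Lemma adjoin_span_without_full i : <<span_without i; r i>>%VS = fullv.
Proof.
apply/eqP; rewrite eqEsubv subvf -r_gen.
apply/(Fadjoin_seqP (E := <<span_without i; r i>>%AS)).
split; first exact: sub1v.
move=> _ /codomP[j ->]; have [-> | ji] := eqVneq j i; first exact: memv_adjoin.
by apply/subvP_adjoin/memv_monomial_span1; rewrite !inE.
Qed.

Lemma flip_aut_in i : {f : 'AEnd(L) | forall j, f (r j) = (-1) ^+ (j == i) * r j}.
Proof.
have [|||f fixV fri] := @quadratic_aut_exists _ _ (span_without i) (r i).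
- exact: r_notin_span_without.
- by rewrite r_sqr rpred_nat.
- exact: adjoin_span_without_full.
exists f => j; have [-> | ji] := eqVneq j i; first by rewrite fri mulN1r.
by rewrite mul1r fixV //; apply: memv_monomial_span1; rewrite !inE.
Qed.

End SqrtFlip.

Section SignAutomorphisms.
Variables (k : nat) (p : 'I_k -> nat).
Hypothesis hdeg : full_degree p.

Lemma sqrt_flip_aut i : {nu : {rmorphism algC -> algC} |
  forall j, nu (sqrtC (p j)%:R) = (-1) ^+ (j == i) * sqrtC (p j)%:R}.
Proof.
have [L [LC [s Ds s_gen]]] := num_field_exists (codom (fun j => sqrtC (p j)%:R)).
have size_s : size s = k by rewrite -(size_map LC) Ds size_codom card_ord.
pose r (j : 'I_k) := nth 0 s j.
have LC_r j : LC (r j) = sqrtC (p j)%:R.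
  rewrite -(nth_map 0 0) ?size_s // Ds codomE.
  by rewrite (nth_map j) ?nth_ord_enum ?size_enum_ord.
have r_gen : <<1 & codom r>>%VS = fullv.
  rewrite codomE (map_comp (nth 0 s) val) val_enum_ord -size_s.
  by rewrite -/(mkseq _ _) mkseq_nth.
have [f Df] := flip_aut_in hdeg LC_r r_gen i.
have [nu Dnu] := extend_algC_subfield_aut LC f.
by exists nu => j; rewrite -LC_r -Dnu /= Df rmorphM rmorph_sign.
Qed.

Lemma sign_aut_exists (S : {set 'I_k}) : {nu : {rmorphism algC -> algC} |
  forall j, nu (sqrtC (p j)%:R) = (-1) ^+ (j \in S) * sqrtC (p j)%:R}.
Proof.
suff [nu Dnu] : {nu : {rmorphism algC -> algC} |
    forall j, nu (sqrtC (p j)%:R) = (-1) ^+ (j \in enum S) * sqrtC (p j)%:R}.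
  by exists nu => j; rewrite Dnu mem_enum.
elim: (enum S) (enum_uniq S) => [_ | i s IHs /andP[iNs /IHs[nu Dnu]]].
  by exists idfun => j; rewrite mul1r.
have [t Dt] := sqrt_flip_aut i.
exists (t \o nu) => j /=; rewrite Dnu rmorphM rmorph_sign Dt mulrA -signr_addb.
by rewrite in_cons; case: eqVneq => [-> | _]; rewrite ?addbT ?addbF ?iNs.
Qed.

End SignAutomorphisms.

Section TracePositivity.
Variables (k : nat) (p : 'I_k -> nat).
Hypotheses (p_gt0 : forall i, (0 < p i)%N) (hdeg : full_degree p).
Local Notation N := (#|{set 'I_k}|%:R : algC).

Lemma pI_squarefree I : squarefree (pI p I).
Proof. by apply: sqfree_part_squarefree; rewrite prodn_gt0. Qed.

Lemma sqrt_pI_ge1 I : 1 <= sqrt_pI p I.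
Proof.
rewrite /sqrt_pI -{1}sqrtC1 ler_sqrtC ?nnegrE ?ler01 ?ler0n // ler1n.
by apply: sqfree_part_gt0; rewrite prodn_gt0.
Qed.

Lemma sqrt_pI0 : sqrt_pI p set0 = 1.
Proof. by rewrite /sqrt_pI /pI big_set0 sqfree_part1 sqrtC1. Qed.

Definition sign_aut (S : {set 'I_k}) : {rmorphism algC -> algC} :=
  sval (sign_aut_exists hdeg S).

Definition conj_sum (x : algC) : algC := \sum_S sign_aut S x.

Lemma sign_aut_sqrt_pI S J : sign_aut S (sqrt_pI p J) = chi S J * sqrt_pI p J.
Proof.
have n_gt0 : (0 < \prod_(i in J) p i)%N by rewrite prodn_gt0.
have Dprod : \prod_(i in J) sqrtC (p i)%:R =
    (sq_div (\prod_(i in J) p i))%:R * sqrt_pI p J.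
  by rewrite prod_sqrtC_nat sqrtC_sq_div.
have := congr1 (sign_aut S) Dprod; rewrite rmorph_prod rmorphM rmorph_nat.
under eq_bigr do rewrite (svalP (sign_aut_exists hdeg S)).
rewrite big_split /= -/(chi S J) Dprod mulrCA => /mulfI-> //.
by rewrite pnatr_eq0 -lt0n sq_div_gt0.
Qed.

Lemma sign_aut_mq_elt a S :
  sign_aut S (mq_elt p a) = \sum_L ratr (a L) * sqrt_pI p L * chi S L.
Proof.
rewrite rmorph_sum; apply: eq_bigr => L _.
by rewrite rmorphM fmorph_rat sign_aut_sqrt_pI mulrCA mulrC.
Qed.

Lemma sum_chi_sign_aut a J :
  \sum_S chi S J * sign_aut S (mq_elt p a) = ratr (a J) * sqrt_pI p J * N.
Proof.
under eq_bigr do rewrite sign_aut_mq_elt.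
exact: (chi_inversion (fun L => ratr (a L) * sqrt_pI p L)).
Qed.

Lemma conj_sum_mq_elt a : conj_sum (mq_elt p a) = ratr (a set0) * N.
Proof.
have := sum_chi_sign_aut a set0; rewrite sqrt_pI0 mulr1 => <-.
by apply: eq_bigr => S _; rewrite /chi big_set0 mul1r.
Qed.

Lemma conj_sum_mult_matrix a M :
  mult_matrix p (mq_elt p a) M -> ratr (trace_of M) = conj_sum (mq_elt p a).
Proof.
move=> hM; have N_neq0 : N != 0.
  by rewrite pnatr_eq0 -lt0n; apply/card_gt0P; exists set0.
have diag J : ratr (M J J) = conj_sum (mq_elt p a) / N.
  apply: (mulIf N_neq0); rewrite divfK //.
  have := congr1 (fun x => \sum_S chi S J * sign_aut S x) (hM J).
  rewrite /= -/(mq_elt p (M^~ J)) sum_chi_sign_aut.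
  under eq_bigr do
    rewrite rmorphM sign_aut_sqrt_pI mulrA mulrACA -expr2 chi_sqr mul1r mulrC.
  rewrite -mulr_sumr mulrAC [RHS]mulrC => /mulfI <- //.
  exact: lt0r_neq0 (lt_le_trans ltr01 (sqrt_pI_ge1 J)).
rewrite /trace_of rmorph_sum (eq_bigr _ (fun J _ => diag J)).
by rewrite sumr_const -(mulr_natr (_ / N)) divfK.
Qed.

Variable a : {set 'I_k} -> rat.
Hypotheses (a_int : mq_elt p a \in Aint) (a_pos : totally_positive (mq_elt p a)).

Lemma sqrt_pI_lt_conj_sum I :
  I != set0 -> a I != 0 -> sqrt_pI p I < conj_sum (mq_elt p a).
Proof.
move=> /set0Pn[j jI] aI_neq0.
set x := \sum_S chi S I * sign_aut S (mq_elt p a).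
set c : algC := ratr (a I * #|{set 'I_k}|%:R).
have Dx : x = c * sqrt_pI p I.
  by rewrite /x sum_chi_sign_aut /c rmorphM rmorph_nat mulrAC.
have x_Aint : x \in Aint.
  apply: rpred_sum => S _; rewrite rpredM ?Aint_aut //.
  by apply: rpred_prod => i _; rewrite rpredX ?rpredN ?rpred1.
have Dx2 : x ^+ 2 = c ^+ 2 * (pI p I)%:R by rewrite Dx exprMn sqrtCK.
have c_int : c \in Num.int.
  have c_rat : c \in Crat by exact: Crat_rat.
  apply: (Cint_sqr_squarefree c_rat (pI_squarefree I)).
  rewrite -Dx2; apply: Cint_rat_Aint; last exact: rpredX.
  by rewrite Dx2 rpredM ?rpred_nat ?rpredX.
have c_ge1 : 1 <= `|c|.
  apply: norm_intr_ge1 => //; rewrite fmorph_eq0 mulf_neq0 // pnatr_eq0 -lt0n.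
  by apply/card_gt0P; exists set0.
have x_lt : `|x| < conj_sum (mq_elt p a).
  apply: (ltr_norm_sum_sign (s0 := set0) (s1 := [set j])) => [S|S||].
  - exact: a_pos.
  - exact: chi_sqr.
  - exact: chi_set0l.
  - exact: chi_set1l.
have sqrt_ge0 := le_trans ler01 (sqrt_pI_ge1 I).
by apply: le_lt_trans x_lt; rewrite Dx normrM (ger0_norm sqrt_ge0) ler_peMl.
Qed.

Lemma one_lt_conj_sum : (0 < k)%N -> 1 < conj_sum (mq_elt p a).
Proof.
move=> k_gt0; pose j := Ordinal k_gt0.
have [aj0 | aj_neq0] := eqVneq (a [set j]) 0; last first.
  apply: le_lt_trans (sqrt_pI_ge1 _) (sqrt_pI_lt_conj_sum _ aj_neq0).
  by apply/set0Pn; exists j; rewrite inE.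
set z := \sum_(S : {set 'I_k} | j \notin S) sign_aut S (mq_elt p a).
have z2 : z *+ 2 = conj_sum (mq_elt p a).
  have := sum_chi_sign_aut a [set j]; rewrite aj0 rmorph0 !mul0r.
  rewrite (bigID (fun S : {set 'I_k} => j \in S)) /=.
  rewrite (eq_bigr (fun S => - sign_aut S (mq_elt p a))) => [|S jS]; last first.
    by rewrite chi_set1r jS mulN1r.
  rewrite [X in _ + X](eq_bigr (fun S => sign_aut S (mq_elt p a))); last first.
    by move=> S /negbTE jS; rewrite chi_set1r jS mul1r.
  rewrite sumrN addrC => /eqP; rewrite subr_eq0 => /eqP Dz.
  by rewrite /conj_sum (bigID (fun S : {set 'I_k} => j \in S)) /= -Dz mulr2n.
have z_int : z \in Num.int.
  apply: Cint_rat_Aint; last by apply: rpred_sum => S _; rewrite Aint_aut.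
  have -> : z = ratr (a set0 * #|{set 'I_k}|%:R / 2).
    rewrite !(rmorphM, rmorph_nat, fmorphV) -conj_sum_mq_elt -z2.
    by rewrite -mulr_natr mulfK ?pnatr_eq0.
  exact: Crat_rat.
have z_gt0 : 0 < z.
  rewrite /z (bigD1 set0) ?inE //=; apply: ltr_wpDr; last exact: a_pos.
  by apply: sumr_ge0 => S _; exact/ltW/a_pos.
have z_ge1 : 1 <= z by rewrite -(ger0_norm (ltW z_gt0)) norm_intr_ge1 ?gt_eqF.
by rewrite -z2 mulr2n ltr_pwDr.
Qed.

End TracePositivity.

Theorem lemma5 (k : nat) (hk : (0 < k)%N) (p : 'I_k -> nat)
    (hp_pos : forall i, (0 < p i)%N) (hp_sqf : forall i, squarefree (p i))
    (hdeg : full_degree p)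
    (a : {set 'I_k} -> rat)
    (hint : mq_elt p a \in Aint)
    (hpos : totally_positive (mq_elt p a))
    (I : {set 'I_k}) (haI : a I != 0)
    (M : {set 'I_k} -> {set 'I_k} -> rat)
    (hM : mult_matrix p (mq_elt p a) M) :
  sqrt_pI p I < ratr (trace_of M).
Proof.
rewrite (conj_sum_mult_matrix hp_pos hdeg hM).
have [-> | I_neq0] := eqVneq I set0.
  by rewrite sqrt_pI0; apply: (one_lt_conj_sum hp_pos hdeg hint hpos hk).
exact: (sqrt_pI_lt_conj_sum hp_pos hdeg hint hpos I_neq0 haI).
Qed.
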